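(* Let the branching factor satisfy $b>1$, let $\ell^*$ be the peak of the single-peaked sequence $\{\lambda_i\}$ and $\gamma>1$ a constant with $\sum_{j\ge i}\lambda_j\le\gamma\lambda_i$ for all $i\ge\ell^*+2$. Then for every $i$ with $\ell^*+1\le i\le h$, $x_i\le\gamma\,(h-i)$.
   Context: Galton–Watson branching process on an infinite $d$-ary tree (root at level $0$) with offspring distribution $D=\{c_j\}_{j=0}^d$, branching factor $b=\sum_j jc_j$; each non-root node independently holds an answer with probability $1/n$. Let $t(x)=\sum_jc_jx^j(1-\frac1n)^j$, $\phi_0=1$, $\phi_i=t(\phi_{i-1})$, $\lambda_i=\phi_{i-1}-\phi_i$. For $b>1$ the sequence $\{\lambda_i\}$ is single-peaked: there is a level $\ell^*$ with $\lambda_{i-1}\le\lambda_i$ for $i\le\ell^*$ and $\lambda_j>\lambda_{j+1}$ for $j\ge\ell^*$, and there is a constant $\gamma>1$ (independent of $n$) with $\sum_{j\ge i}\lambda_j\le\gamma\lambda_i$ for all $i\ge\ell^*+2$. For a level $h$, define $x_h=0$ and for $i\le h-1$, $x_i=\max_{i+1\le j\le h}\{x_j+\frac{j-i}{\lambda_{i+1}}\sum_{\ell=i+1}^h\lambda_\ell\}$ (the direct referral rewards of the DR mechanism). *)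

From HB Require Import structures.
From mathcomp Require Import all_boot all_order all_algebra.
From mathcomp Require Import all_classical all_reals all_analysis.
Set Implicit Arguments. Unset Strict Implicit. Unset Printing Implicit Defensive.
Import Order.TTheory GRing.Theory Num.Theory.
Local Open Scope ring_scope.

Section DR.
Variable R : realType.

Definition tgen (d n : nat) (c : nat -> R) (x : R) : R :=
  \sum_(j < d.+1) c j * x ^+ j * (1 - n%:R^-1) ^+ j.

Fixpoint phi (d n : nat) (c : nat -> R) (i : nat) : R :=
  match i with
  | 0 => 1
  | i'.+1 => tgen d n c (phi d n c i')
  end.

(* lambda_i = phi_{i-1} - phi_i  (meaningful for i >= 1; lambda_0 = 0) *)
Definition lam (d n : nat) (c : nat -> R) (i : nat) : R :=
  phi d n c i.-1 - phi d n c i.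

(* xlist lam h k = [:: x_h; x_{h-1}; ...; x_{h-k}]  (entry m is x_{h-m}),
   where x_h = 0 and for i <= h-1
   x_i = max_{i+1 <= j <= h} ( x_j + (j-i)/lam_{i+1} * sum_{l=i+1}^h lam_l ).
   In the recursive step i = h - k and j = h - m with m < k. *)
Fixpoint xlist (la : nat -> R) (h k : nat) : seq R :=
  match k with
  | 0 => [:: 0]
  | k'.+1 =>
      let s := xlist la h k' in
      let i := (h - k'.+1)%N in
      let S := \sum_(i.+1 <= l < h.+1) la l in
      let v := fun m : 'I_k'.+1 => s`_m + ((k'.+1 - m)%:R / la i.+1) * S in
      rcons s (\big[Num.max/v ord0]_(m < k'.+1) v m)
  end.

Definition xDR (la : nat -> R) (h i : nat) : R :=
  nth 0 (xlist la h (h - i)) (h - i).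

End DR.

(* Unwinding the maximum: x_i = x_j + (j - i) S_{i+1} / lambda_{i+1} for some
   j > i, where S_{i+1} is the tail sum of the lambda's up to level h. Above the
   peak, S_{i+1} <= gamma lambda_{i+1}, so each such step adds at most
   gamma (j - i), and by induction downwards from x_h = 0 the increments
   telescope to gamma (h - i). *)
From HB Require Import structures.
From mathcomp Require Import all_boot all_order all_algebra.
From mathcomp Require Import all_classical all_reals all_analysis.
From mathcomp Require Import zify.
Import Order.TTheory GRing.Theory Num.Theory.
Local Open Scope ring_scope.

Section Extinction.
Context {R : realType} {d n : nat} {c : nat -> R}.
Hypotheses (n_gt0 : (0 < n)%N) (c_ge0 : forall j, 0 <= c j)
  (c_sum1 : \sum_(j < d.+1) c j = 1).

Let q_ge0 : 0 <= 1 - n%:R^-1 :> R.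
Proof. by rewrite subr_ge0 invf_le1 ?ler1n ?ltr0n. Qed.

Let q_le1 : 1 - n%:R^-1 <= 1 :> R.
Proof. by rewrite lerBlDr lerDl invr_ge0. Qed.

Lemma tgen_ge0 x : 0 <= x -> 0 <= tgen d n c x.
Proof.
by move=> x_ge0; apply: sumr_ge0 => j _; rewrite !mulr_ge0 ?exprn_ge0.
Qed.

Lemma tgen_le x y : 0 <= x -> x <= y -> tgen d n c x <= tgen d n c y.
Proof.
move=> x_ge0 xy; apply: ler_sum => j _.
rewrite ler_wpM2r ?exprn_ge0 // ler_wpM2l // lerXn2r ?nnegrE //.
exact: le_trans xy.
Qed.

Lemma tgen1_le1 : tgen d n c 1 <= 1.
Proof.
rewrite /tgen -[leRHS]c_sum1; apply: ler_sum => j _.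
by rewrite expr1n mulr1 ler_piMr ?exprn_ile1.
Qed.

Lemma phi_ge0_nonincreasing i :
  0 <= phi d n c i.+1 /\ phi d n c i.+1 <= phi d n c i.
Proof.
elim: i => [|i [ge0 le]] /=; first by rewrite tgen_ge0 ?tgen1_le1.
by rewrite tgen_ge0 ?tgen_le.
Qed.

Lemma lam_ge0 l : 0 <= lam d n c l.
Proof.
case: l => [|l]; first by rewrite /lam subrr.
by rewrite /lam subr_ge0; case: (phi_ge0_nonincreasing l).
Qed.

End Extinction.

Section DirectReferralRewards.
Context {R : realType} {la : nat -> R}.

Lemma size_xlist h k : size (xlist la h k) = k.+1.
Proof. by elim: k => //= k IH; rewrite size_rcons IH. Qed.

Lemma nth_xlist_prefix h k m : (m <= k)%N ->
  nth 0 (xlist la h k.+1) m = nth 0 (xlist la h k) m.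
Proof. by move=> mk; rewrite /= nth_rcons size_xlist ltnS mk. Qed.

(* [a = 0] is harmless: then [r / a = 0] since [0^-1 = 0]. *)
Lemma ler_mul_ratio {a r S g : R} :
  0 <= a -> 0 <= r -> 0 <= g -> S <= g * a -> r / a * S <= g * r.
Proof.
move=> a_ge0 r_ge0 g_ge0 Sa.
have [->|a_neq0] := eqVneq a 0; first by rewrite invr0 mulr0 mul0r mulr_ge0.
have a_gt0 : 0 < a by rewrite lt0r a_neq0.
by rewrite mulrAC -mulrA [g * r]mulrC ler_wpM2l // ler_pdivrMr.
Qed.

Lemma xDR_le_linear (gamma : R) (h i0 : nat) :
  (forall l, 0 <= la l) -> 0 <= gamma ->
  (forall i, (i0 < i <= h)%N -> \sum_(i <= l < h.+1) la l <= gamma * la i) ->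
  forall i, (i0 <= i <= h)%N -> xDR la h i <= gamma * (h - i)%:R.
Proof.
move=> la_ge0 gamma_ge0 tail_le i /andP[i0i ih].
suff: forall k, (k <= h - i0)%N ->
    forall m, (m <= k)%N -> nth 0 (xlist la h k) m <= gamma * m%:R.
  by apply; rewrite ?leq_sub2l.
elim=> [|k IH] k_le m.
  by rewrite leqn0 => /eqP->; rewrite mulr0.
rewrite leq_eqVlt ltnS => /orP[/eqP->|m_le]; last first.
  by rewrite nth_xlist_prefix // IH // ltnW.
rewrite /= nth_rcons size_xlist ltnn eqxx.
set lvl := (h - k.+1)%N.
have tail_i : \sum_(lvl.+1 <= l < h.+1) la l <= gamma * la lvl.+1.
  by apply: tail_le; rewrite /lvl; lia.
have step (m' : 'I_k.+1) : nth 0 (xlist la h k) m' +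
    (k.+1 - m')%:R / la lvl.+1 * \sum_(lvl.+1 <= l < h.+1) la l
    <= gamma * k.+1%:R.
  have m'_le : (m' <= k)%N by rewrite -ltnS.
  have := lerD (IH (ltnW k_le) _ m'_le)
    (ler_mul_ratio (r := (k.+1 - m')%:R) (la_ge0 _) (ler0n _ _) gamma_ge0 tail_i).
  by rewrite -mulrDr -natrD subnKC // ltnW.
elim/big_ind: _ => [|x y|m' _]; [exact: (step ord0)| |exact: step].
by rewrite ge_max => -> ->.
Qed.

End DirectReferralRewards.

Lemma partial_sum_le_nneseries {R : realType} {u : nat -> R} {i N : nat} {x : R} :
  (forall j, 0 <= u j) -> (\sum_(i <= j <oo) (u j)%:E <= x%:E)%E ->
  \sum_(i <= j < N) u j <= x.
Proof.
move=> u_ge0 series_le; rewrite -lee_fin -sumEFin; apply: le_trans series_le.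
by apply: nneseries_lim_ge => j _ _; rewrite lee_fin.
Qed.

Theorem proposition5p3 (R : realType) (d n : nat) (c : nat -> R) :
  (0 < n)%N ->
  (forall j, 0 <= c j) ->
  \sum_(j < d.+1) c j = 1 ->
  1 < \sum_(j < d.+1) j%:R * c j ->
  forall (lstar : nat) (gamma : R),
  (forall i, (2 <= i <= lstar)%N -> lam d n c i.-1 <= lam d n c i) ->
  (forall j, (lstar <= j)%N -> lam d n c j.+1 < lam d n c j) ->
  1 < gamma ->
  (forall i, (lstar.+2 <= i)%N ->
     (\sum_(i <= j <oo) (lam d n c j)%:E <= (gamma * lam d n c i)%:E)%E) ->
  forall h i, (lstar.+1 <= i <= h)%N ->
  xDR (lam d n c) h i <= gamma * (h - i)%:R.
Proof.
move=> n_gt0 c_ge0 c_sum1 _ lstar gamma _ _ gamma_gt1 tail_le h i hi.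
have la_ge0 := lam_ge0 n_gt0 c_ge0 c_sum1.
have gamma_ge0 : 0 <= gamma := le_trans ler01 (ltW gamma_gt1).
apply: (xDR_le_linear _ _ _ la_ge0 gamma_ge0 _ _ hi) => j /andP[lt_j _].
exact: (@partial_sum_le_nneseries R (lam d n c) j h.+1 _ la_ge0 (tail_le j lt_j)).
Qed.
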